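(* For every real $\kappa>\frac56$ there exists a doubly stochastic $2\times 2$ matrix $\mathcal M_\kappa$ such that no directed $3$-regular multigraph $G$ on $[2]$ has throughput at least $\kappa$ with respect to $\mathcal M_\kappa$ (i.e., no such $G$ hosts $\kappa\mathcal M_\kappa$).
   Context: Let $n\ge 1$ and $[n]=\{1,\dots,n\}$. Networks are finite directed multigraphs on vertex set $[n]$; self-loops and parallel arcs are allowed. A directed multigraph is directed $r$-regular if every vertex has exactly $r$ outgoing and exactly $r$ incoming arcs (a self-loop at $v$ counts as one outgoing and one incoming arc of $v$). A path is a non-empty sequence of arcs $((u_1,v_1),\dots,(u_\ell,v_\ell))$ with $v_i=u_{i+1}$ for $i<\ell$; it goes from $u_1$ to $v_\ell$ and has length $\ell\ge 1$. An $n\times n$ matrix is doubly stochastic if all entries are nonnegative and every row and every column sums to $1$. In a directed $(2n-1)$-regular multigraph $G$ on $[n]$ every arc has capacity $\frac{1}{2n-1}$. $G$ hosts a nonnegative $n\times n$ matrix $\mathcal M=(a_{i,j})$ if there is a finite collection $\{(P_k,d_k)\}$, where each $P_k$ is a path in $G$ from some $s_k$ to some $t_k$ and $d_k\ge 0$, such that $\sum_{k:\,s_k=u,\,t_k=v} d_k=a_{u,v}$ for all $u,v\in[n]$, and for every arc $e$ of $G$ (parallel arcs are distinct) $\sum_{k:\,e\in P_k} d_k\le \frac{1}{2n-1}$. The throughput of $G$ with respect to a doubly stochastic $\mathcal M$ is the largest $\theta$ such that $G$ hosts $\theta\mathcal M$. *)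

From HB Require Import structures.
From mathcomp Require Import all_boot all_order all_algebra.
From mathcomp Require Import reals.
Set Implicit Arguments. Unset Strict Implicit. Unset Printing Implicit Defensive.
Import Order.TTheory GRing.Theory Num.Theory.
Local Open Scope ring_scope.

(* A finite directed multigraph on [n] = 'I_n, given by arc multiplicities:
   G u v = number of (parallel) arcs from u to v; G v v = number of
   self-loops at v. *)
Definition multigraph (n : nat) := 'I_n -> 'I_n -> nat.

(* An individual arc ((u, v), k) is the k-th parallel arc from u to v,
   valid in G iff k < G u v.  Parallel arcs are thus distinct objects. *)
Definition arc (n : nat) := ('I_n * 'I_n * nat)%type.
Definition arc_src n (e : arc n) : 'I_n := e.1.1.
Definition arc_tgt n (e : arc n) : 'I_n := e.1.2.
Definition valid_arc n (G : multigraph n) (e : arc n) : bool :=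
  (e.2 < G (arc_src e) (arc_tgt e))%N.

(* Directed r-regular: every vertex has exactly r outgoing and r incoming
   arcs (a self-loop at v counts once as outgoing and once as incoming). *)
Definition directed_regular n (r : nat) (G : multigraph n) : Prop :=
  forall v : 'I_n,
    (\sum_(w < n) G v w)%N = r /\ (\sum_(u < n) G u v)%N = r.

Definition is_path_from_to n (G : multigraph n) (s t : 'I_n) (p : seq (arc n))
  : bool :=
  match p with
  | [::] => false
  | e :: p' =>
      [&& arc_src e == s, arc_tgt (last e p') == t,
          path (fun a b : arc n => arc_tgt a == arc_src b) e p'
        & all (valid_arc G) p]
  end.

(* A routing: finite collection of (path P_k from s_k to t_k, amount d_k).
   Entry ((s, t), P, d). *)
Definition routing (R : realType) n :=
  seq ('I_n * 'I_n * seq (arc n) * R)%type.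

Definition hosts (R : realType) n (G : multigraph n) (A : 'M[R]_n) : Prop :=
  exists F : routing R n,
    (forall f, f \in F -> is_path_from_to G f.1.1.1 f.1.1.2 f.1.2 /\ 0 <= f.2)
    /\ (forall u v : 'I_n,
          \sum_(f <- F | (f.1.1.1 == u) && (f.1.1.2 == v)) f.2 = A u v)
    /\ (forall e : arc n, valid_arc G e ->
          \sum_(f <- F | e \in f.1.2) f.2 <= ((2 * n - 1)%N%:R)^-1).

Definition doubly_stochastic (R : realType) n (M : 'M[R]_n) : Prop :=
  (forall i j, 0 <= M i j)
  /\ (forall i, \sum_(j < n) M i j = 1)
  /\ (forall j, \sum_(i < n) M i j = 1).

From Pilot Require Import Defs.
From HB Require Import structures.
From mathcomp Require Import all_boot all_order all_algebra.
From mathcomp Require Import reals.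
From mathcomp Require Import ring lra zify.
Set Implicit Arguments. Unset Strict Implicit. Unset Printing Implicit Defensive.
Import Order.TTheory GRing.Theory Num.Theory.
Local Open Scope ring_scope.

(* Take M = [[p, 1-p], [1-p, p]] with p = 1/(2 kappa): kappa M asks for 1/2 on
   the diagonal and kappa - 1/2 off it.  If G has a arcs 0->1, regularity leaves
   3 - a loops at each vertex.  A path 0->1 uses an arc 0->1, and a closed path
   at 0 (resp. 1) uses an arc 0->1 or a loop at 0 (resp. 1); with capacities 1/3
   this yields kappa - 1/2 <= a/3 and kappa + 1/2 <= (6 - a)/3, which for an
   integer a force kappa <= 5/6. *)

Section CountingBound.
Variables (R : numDomainType) (T : eqType) (F : seq T) (d : T -> R).

Lemma sum_preds_count (Ps : seq (pred T)) :
  \sum_(P <- Ps) \sum_(f <- F | P f) d f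
    = \sum_(f <- F) d f *+ count (fun P : pred T => P f) Ps.
Proof.
elim: Ps => [|P Ps IH]; first by rewrite big_nil big1.
rewrite big_cons IH big_mkcond -big_split /=; apply: eq_bigr => f _.
by rewrite mulrnDr; case: (P f).
Qed.

Lemma ler_sum_preds_count (Ps Qs : seq (pred T)) :
  {in F, forall f, 0 <= d f} ->
  {in F, forall f,
     count (fun P : pred T => P f) Ps <= count (fun Q : pred T => Q f) Qs}%N ->
  \sum_(P <- Ps) \sum_(f <- F | P f) d f
    <= \sum_(Q <- Qs) \sum_(f <- F | Q f) d f.
Proof.
move=> d_ge0 le_count; rewrite !sum_preds_count big_seq [leRHS]big_seq.
by apply: ler_sum => f fF; apply: ler_wpMn2l; [exact: d_ge0 | exact: le_count].
Qed.

End CountingBound.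

(* [Defs.arc] is qualified because path.v also exports an [arc]. *)
Definition has_arc n (u v : 'I_n) (p : seq (Defs.arc n)) : bool :=
  has (fun e => (arc_src e == u) && (arc_tgt e == v)) p.

Section Paths.
Variables (n : nat) (G : multigraph n).

Lemma is_path_has_first_arc s t p :
  is_path_from_to G s t p -> exists v, has_arc s v p.
Proof.
case: p => [|e p] // /and4P [/eqP es _ _ _].
by exists (arc_tgt e); apply/hasP; exists e; rewrite ?mem_head ?es ?eqxx.
Qed.

Lemma is_path_has_last_arc s t p :
  is_path_from_to G s t p -> exists u, has_arc u t p.
Proof.
case: p => [|e p] // /and4P [_ /eqP lt _ _].
exists (arc_src (last e p)); apply/hasP; exists (last e p); first exact: mem_last.
by rewrite lt !eqxx.
Qed.

Lemma is_path_cut (S : pred 'I_n) s t p :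
  is_path_from_to G s t p -> s \in S -> t \notin S ->
  exists u v, [/\ u \in S, v \notin S & has_arc u v p].
Proof.
case: p => [|e p] // /and4P [/eqP <- /eqP <- + _].
elim: p e => [|e' p IH] e.
  by move=> _ eS tS; exists (arc_src e), (arc_tgt e); rewrite /has_arc /= !eqxx.
move=> /= /andP [/eqP glue pth] eS lS.
have [tS | tS] := boolP (arc_tgt e \in S).
  have [|u [v [uS vS huv]]] := IH e' pth _ lS; first by rewrite -glue.
  by exists u, v; split => //; apply/orP; right.
by exists (arc_src e), (arc_tgt e); rewrite /has_arc /= !eqxx.
Qed.

Lemma is_path_valid s t p :
  is_path_from_to G s t p -> all (valid_arc G) p.
Proof. by case: p => [|e p] // /and4P []. Qed.

End Paths.

Section ArcLoad.
Variables (R : realType) (n : nat) (G : multigraph n) (F : routing R n) (c : R).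
Hypothesis F_path : forall f, f \in F ->
  is_path_from_to G f.1.1.1 f.1.1.2 f.1.2 /\ 0 <= f.2.
Hypothesis F_cap : forall e, valid_arc G e -> \sum_(f <- F | e \in f.1.2) f.2 <= c.

Lemma sum_has_arc_le u v :
  \sum_(f <- F | has_arc u v f.1.2) f.2 <= (G u v)%:R * c.
Proof.
have split_copies : \sum_(f <- F | has_arc u v f.1.2) f.2
    <= \sum_(k <- iota 0 (G u v)) \sum_(f <- F | (u, v, k) \in f.1.2) f.2.
  pose uses_copy k (f : 'I_n * 'I_n * seq (Defs.arc n) * R) := (u, v, k) \in f.1.2.
  have := @ler_sum_preds_count _ _ F (fun f => f.2)
    [:: fun f => has_arc u v f.1.2] (map uses_copy (iota 0 (G u v))).
  rewrite big_seq1 big_map; apply; first by move=> f /F_path [].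
  move=> f /F_path [/is_path_valid /allP valid _] /=.
  rewrite count_map addn0.
  case: (boolP (has_arc _ _ _)) => // /hasP [e ef /andP [/eqP eu /eqP ev]].
  rewrite -has_count; apply/hasP; exists e.2.
    by rewrite mem_iota add0n /= -eu -ev; apply: valid.
  by rewrite /= /uses_copy -eu -ev; case: e ef {eu ev} => [[]].
apply: le_trans split_copies _.
have -> : (G u v)%:R * c = \sum_(k <- iota 0 (G u v)) c.
  by rewrite big_const_seq count_predT size_iota iter_addr_0 mulr_natl.
rewrite big_seq [leRHS]big_seq; apply: ler_sum => k.
by rewrite mem_iota add0n => /andP [_ k_lt]; exact: F_cap.
Qed.

End ArcLoad.

Local Notation v0 := (ord0 : 'I_2).
Local Notation v1 := (ord_max : 'I_2).

Lemma ord2P (x : 'I_2) : x = v0 \/ x = v1.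
Proof. by case: x => [[|[|//]] ?]; [left | right]; apply: val_inj. Qed.

Section TwoVertices.
Variable G : multigraph 2.

Lemma is_path2_cross p : is_path_from_to G v0 v1 p -> has_arc v0 v1 p.
Proof.
move=> pth; have [||u [v [/eqP -> vS]]] := is_path_cut (S := pred1 v0) pth => //.
by case: (ord2P v) vS => -> //; rewrite inE eqxx.
Qed.

Lemma is_path2_loop0 p :
  is_path_from_to G v0 v0 p -> has_arc v0 v0 p || has_arc v0 v1 p.
Proof.
by case/is_path_has_first_arc => v; case: (ord2P v) => -> ->; rewrite ?orbT.
Qed.

Lemma is_path2_loop1 p :
  is_path_from_to G v1 v1 p -> has_arc v1 v1 p || has_arc v0 v1 p.
Proof.
by case/is_path_has_last_arc => u; case: (ord2P u) => -> ->; rewrite ?orbT.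
Qed.

Variables (R : realType) (F : routing R 2) (c : R).
Hypothesis F_path : forall f, f \in F ->
  is_path_from_to G f.1.1.1 f.1.1.2 f.1.2 /\ 0 <= f.2.
Hypothesis F_cap : forall e, valid_arc G e -> \sum_(f <- F | e \in f.1.2) f.2 <= c.

Let demand u v := \sum_(f <- F | (f.1.1.1 == u) && (f.1.1.2 == v)) f.2.

Lemma routing2_cross_le : demand v0 v1 <= (G v0 v1)%:R * c.
Proof.
apply: le_trans (sum_has_arc_le F_path F_cap v0 v1).
have := @ler_sum_preds_count _ _ F (fun f => f.2)
  [:: fun f => (f.1.1.1 == v0) && (f.1.1.2 == v1)] [:: fun f => has_arc v0 v1 f.1.2].
rewrite !big_seq1; apply; first by move=> f /F_path [].
move=> f /F_path [pth _] /=; rewrite !addn0.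
by case: eqP pth => [-> | //]; case: eqP => [-> /is_path2_cross -> | //].
Qed.

Lemma routing2_total_le :
  demand v0 v1 + demand v0 v0 + demand v1 v1
    <= (G v0 v1 + G v0 v0 + G v1 v1)%:R * c.
Proof.
rewrite !natrD !mulrDl.
apply: le_trans (lerD (lerD (sum_has_arc_le F_path F_cap v0 v1)
  (sum_has_arc_le F_path F_cap v0 v0)) (sum_has_arc_le F_path F_cap v1 v1)).
have := @ler_sum_preds_count _ _ F (fun f => f.2)
  [:: fun f => (f.1.1.1 == v0) && (f.1.1.2 == v1);
      fun f => (f.1.1.1 == v0) && (f.1.1.2 == v0);
      fun f => (f.1.1.1 == v1) && (f.1.1.2 == v1)]
  [:: fun f => has_arc v0 v1 f.1.2; fun f => has_arc v0 v0 f.1.2;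
      fun f => has_arc v1 v1 f.1.2].
rewrite !big_cons !big_nil !addr0 !addrA; apply; first by move=> f /F_path [].
move=> f /F_path [pth _] /=.
case: (ord2P f.1.1.1) pth => ->; case: (ord2P f.1.1.2) => -> //= pth.
- by case/orP: (is_path2_loop0 pth) => ->; lia.
- by rewrite (is_path2_cross pth); lia.
- by case/orP: (is_path2_loop1 pth) => ->; lia.
Qed.

End TwoVertices.

Lemma sum_ord2 (f : 'I_2 -> nat) : (\sum_(i < 2) f i = f v0 + f v1)%N.
Proof. by rewrite big_ord_recr big_ord1; congr (f _ + _)%N; apply: val_inj. Qed.

Lemma regular3_hosts2_bound (R : realType) (G : multigraph 2) (A : 'M[R]_2) :
  directed_regular 3 G -> hosts G A ->
  exists a : nat, [/\ (a <= 3)%N, A v0 v1 <= a%:R / 3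
                    & A v0 v1 + A v0 v0 + A v1 v1 <= (6 - a)%:R / 3].
Proof.
move=> regG [F [F_path [F_demand F_cap]]].
have [+ _] := regG v0; have [_ +] := regG v1; rewrite !sum_ord2 => in1 out0.
exists (G v0 v1); split; first by lia.
  by rewrite -F_demand; apply: routing2_cross_le F_path F_cap.
have -> : (6 - G v0 v1 = G v0 v1 + G v0 v0 + G v1 v1)%N by lia.
by rewrite -!F_demand; apply: routing2_total_le F_path F_cap.
Qed.

(* The real relaxation a = 3/2 would allow k = 1: integrality is essential. *)
Lemma integral_cut_bound (R : realFieldType) (a : nat) (k : R) :
  (a <= 3)%N -> k - 1 / 2 <= a%:R / 3 -> k + 1 / 2 <= (6 - a)%:R / 3 ->
  k <= 5 / 6.
Proof.
move=> a_le; rewrite natrB; last by lia.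
by move: a_le; case: a => [|[|[|[|//]]]] _; lra.
Qed.

Definition sym2_mx (R : pzRingType) (p : R) : 'M[R]_2 :=
  \matrix_(i, j) if i == j then p else 1 - p.

Lemma sym2_mx_doubly_stochastic (R : realType) (p : R) :
  0 <= p <= 1 -> doubly_stochastic (sym2_mx p).
Proof.
move=> /andP [p_ge0 p_le1]; split; [|split].
- by move=> i j; rewrite mxE; case: eqP => _; lra.
- by move=> i; rewrite big_ord_recr big_ord1 !mxE; case: (ord2P i) => -> /=; lra.
- by move=> j; rewrite big_ord_recr big_ord1 !mxE; case: (ord2P j) => -> /=; lra.
Qed.

Theorem proposition3p4 (R : realType) (kappa : R) :
  5 / 6 < kappa ->
  exists M : 'M[R]_2,
    doubly_stochastic M /\
    forall G : multigraph 2, directed_regular 3 G -> ~ hosts G (kappa *: M).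
Proof.
move=> kappa_gt; pose p := (2 * kappa)^-1.
have kappa_p : kappa * p = 1 / 2 by rewrite /p; field; lra.
exists (sym2_mx p); split.
  apply: sym2_mx_doubly_stochastic.
  by rewrite invr_ge0 invf_le1; lra.
move=> G regG /(regular3_hosts2_bound regG) [a [a_le cross total]].
rewrite !mxE /= in cross total.
have := integral_cut_bound a_le (k := kappa); lra.
Qed.
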